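(* Let $q\equiv 3\pmod 4$ be a prime power. Let $\Psi:\mathcal{H}_2(\mathbb{F}_{q^2})\to\mathcal{H}_2(\mathbb{F}_{q^2})$ and $\Phi:\mathcal{HGL}_2(\mathbb{F}_{q^2})\to\mathcal{HGL}_2(\mathbb{F}_{q^2})$ be maps and set $\psi=\Omega^{-1}\circ\Psi\circ\Omega:\mathbb{F}_q^4\to\mathbb{F}_q^4$ and $\varphi=\omega^{-1}\circ\Phi\circ\omega:\mathbb{F}_q^4\setminus C_0\to\mathbb{F}_q^4\setminus C_0$. Then: (i) If $\Psi(A)=A+B$ for some fixed $B\in\mathcal{H}_2(\mathbb{F}_{q^2})$, then $\psi(\mathbf{r})=\mathbf{r}+\mathbf{r}_0$ for some $\mathbf{r}_0\in\mathbb{F}_q^4$. (ii) If $\Phi(A)=A^{-1}$, then $\varphi(\mathbf{r})=\frac{L\mathbf{r}}{(\mathbf{r},\mathbf{r})}$ for some Lorentz matrix $L$. (iii) If $\Psi(A)=A^\sigma$ for some field automorphism $\sigma$ of $\mathbb{F}_{q^2}$ (applied entry-wise), then $\psi(\mathbf{r})=L\mathbf{r}^\tau$ for some Lorentz matrix $L$ and some automorphism $\tau$ of $\mathbb{F}_q$ (applied coordinate-wise). (iv) If $\Psi(A)=PAP^\ast$ for some invertible $2\times2$ matrix $P$ such that $\det P\,\overline{\det P}$ is a square in $\mathbb{F}_q$, then $\psi(\mathbf{r})=\alpha L\mathbf{r}$ for some Lorentz matrix $L$ and nonzero $\alpha\in\mathbb{F}_q$. (v) If $\Psi(A)=PAP^\ast$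 for some invertible $P$ such that $\det P\,\overline{\det P}$ is not a square in $\mathbb{F}_q$, then $\psi(\mathbf{r})=\alpha K\mathbf{r}$ for some anti-Lorentz matrix $K$ and nonzero $\alpha\in\mathbb{F}_q$.
   Context: $\mathbb{F}_{q^2}$ is the field with $q^2$ elements, with involution $\bar x=x^q$ whose fixed field is $\mathbb{F}_q$; $X^\ast=\bar X^\top$; $\mathcal{H}_2(\mathbb{F}_{q^2})$ is the set of $2\times2$ hermitian ($A^\ast=A$) matrices and $\mathcal{HGL}_2(\mathbb{F}_{q^2})$ its invertible elements. Since $q\equiv3\pmod4$, $-1$ is not a square in $\mathbb{F}_q$; fix $\imath\in\mathbb{F}_{q^2}$ with $\imath^2=-1$. For $\mathbf{r}_k=(x_k,y_k,z_k,t_k)^\top\in\mathbb{F}_q^4$ put $(\mathbf{r}_1,\mathbf{r}_2)=-x_1x_2-y_1y_2-z_1z_2+t_1t_2$, and $C_0=\{\mathbf{r}:(\mathbf{r},\mathbf{r})=0\}$. A $4\times4$ matrix $L$ over $\mathbb{F}_q$ is Lorentz if $(L\mathbf{r}_1,L\mathbf{r}_2)=(\mathbf{r}_1,\mathbf{r}_2)$ for all $\mathbf{r}_1,\mathbf{r}_2$, and anti-Lorentz if $(L\mathbf{r}_1,L\mathbf{r}_2)=-(\mathbf{r}_1,\mathbf{r}_2)$ for all $\mathbf{r}_1,\mathbf{r}_2$. $\Omega:\mathbb{F}_q^4\to\mathcal{H}_2(\mathbb{F}_{q^2})$ is the bijection $\Omega((x,y,z,t)^\top)=\begin{bmatrix}t+x&y+\imath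 z\\ y-\imath z&t-x\end{bmatrix}$, which maps $\mathbb{F}_q^4\setminus C_0$ bijectively onto $\mathcal{HGL}_2(\mathbb{F}_{q^2})$; $\omega$ is this restriction. *)

From HB Require Import structures.
From mathcomp Require Import all_boot all_order all_algebra.
Set Implicit Arguments. Unset Strict Implicit. Unset Printing Implicit Defensive.
Import Order.TTheory GRing.Theory Num.Theory.
Local Open Scope ring_scope.

(* F plays F_q, K plays F_{q^2}; iota : F -> K is the embedding of F_q in F_{q^2}. *)

Section Defs.
Variables (F K : finFieldType) (iota : {rmorphism F -> K}) (q : nat) (im : K).

Definition conjq (x : K) : K := x ^+ q.

Definition adjq (A : 'M[K]_2) : 'M[K]_2 := (map_mx conjq A)^T.

Definition herm2 (A : 'M[K]_2) : bool := adjq A == A.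

Definition mx2 (a b c d : K) : 'M[K]_2 :=
  \matrix_(i < 2, j < 2)
    if i == 0 :> nat then (if j == 0 :> nat then a else b)
    else (if j == 0 :> nat then c else d).

Definition cx (r : 'cV[F]_4) : F := r (inord 0) 0.
Definition cy (r : 'cV[F]_4) : F := r (inord 1) 0.
Definition cz (r : 'cV[F]_4) : F := r (inord 2) 0.
Definition ct (r : 'cV[F]_4) : F := r (inord 3) 0.

Definition mink (r1 r2 : 'cV[F]_4) : F :=
  - cx r1 * cx r2 - cy r1 * cy r2 - cz r1 * cz r2 + ct r1 * ct r2.

Definition lorentz (L : 'M[F]_4) : Prop :=
  forall r1 r2 : 'cV[F]_4, mink (L *m r1) (L *m r2) = mink r1 r2.

Definition anti_lorentz (L : 'M[F]_4) : Prop :=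
  forall r1 r2 : 'cV[F]_4, mink (L *m r1) (L *m r2) = - mink r1 r2.

Definition Omega (r : 'cV[F]_4) : 'M[K]_2 :=
  mx2 (iota (ct r + cx r)) (iota (cy r) + im * iota (cz r))
      (iota (cy r) - im * iota (cz r)) (iota (ct r - cx r)).

(* the inverse map of the bijection Omega (default 0 outside its range) *)
Definition Omega_inv (M : 'M[K]_2) : 'cV[F]_4 :=
  odflt 0 [pick r : 'cV[F]_4 | Omega r == M].

(* psi = Omega^{-1} o Psi o Omega  (also used for varphi = omega^{-1} o Phi o omega) *)
Definition conjugated (Psi : 'M[K]_2 -> 'M[K]_2) (r : 'cV[F]_4) : 'cV[F]_4 :=
  Omega_inv (Psi (Omega r)).

End Defs.

From Pilot Require Import Defs.
From HB Require Import structures.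
From mathcomp Require Import all_boot all_order all_algebra all_field.
From mathcomp Require Import ring zify.
Set Implicit Arguments. Unset Strict Implicit. Unset Printing Implicit Defensive.
Import Order.TTheory GRing.Theory Num.Theory.
Local Open Scope ring_scope.

(* Omega is an F_q-linear bijection onto the hermitian matrices with
   [det (Omega r) = (r, r)], and hermitian conjugation fixes exactly F_q.
   Hence (i) is additivity of Omega; (ii) follows from [A^-1 = adj A / det A]
   and [adj (Omega r) = Omega (-x, -y, -z, t)]; in (iii) sigma restricts to an
   automorphism tau of F_q and sends the square root [im] of [-1] to [+-im];
   in (iv) and (v) [A |-> P A P^*] is linear and multiplies determinants by
   [N = det P * conj (det P)], an element of F_q, so by polarization the induced
   linear map scales the Minkowski form by [N].  Writing [N] as [alpha ^ 2],
   resp. [-alpha ^ 2] (possible since [-1] is not a square in F_q), the map is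
   [alpha] times a Lorentz, resp. anti-Lorentz, matrix. *)

Section Mx2.
Variable R : finFieldType.

Lemma mx2_eta (A : 'M[R]_2) :
  A = mx2 (A ord0 ord0) (A ord0 ord_max) (A ord_max ord0) (A ord_max ord_max).
Proof.
apply/matrixP => i j; rewrite mxE.
by case: i => [[|[|?]] Hi] //; case: j => [[|[|?]] Hj] //=; congr (A _ _); apply/val_inj.
Qed.

Lemma mx2_inj a b c d a' b' c' d' : mx2 a b c d = mx2 a' b' c' d' :> 'M[R]_2 ->
  [/\ a = a', b = b', c = c' & d = d'].
Proof.
move/matrixP => H; move: (H ord0 ord0) (H ord0 ord_max) (H ord_max ord0).
by move: (H ord_max ord_max); rewrite !mxE.
Qed.

Lemma mx2D a b c d a' b' c' d' :
  mx2 a b c d + mx2 a' b' c' d' = mx2 (a + a') (b + b') (c + c') (d + d') :> 'M[R]_2.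
Proof. by apply/matrixP => i j; rewrite !mxE; case: ifP; case: ifP. Qed.

Lemma mx2Z k a b c d : k *: mx2 a b c d = mx2 (k * a) (k * b) (k * c) (k * d) :> 'M[R]_2.
Proof. by apply/matrixP => i j; rewrite !mxE; case: ifP; case: ifP. Qed.

Lemma mx2T a b c d : (mx2 a b c d)^T = mx2 a c b d :> 'M[R]_2.
Proof. by apply/matrixP => i j; rewrite !mxE; case: ifP; case: ifP. Qed.

Lemma map_mx2 (f : R -> R) a b c d : map_mx f (mx2 a b c d) = mx2 (f a) (f b) (f c) (f d).
Proof. by apply/matrixP => i j; rewrite !mxE; case: ifP; case: ifP. Qed.

Lemma det_mx2 a b c d : \det (mx2 a b c d : 'M[R]_2) = a * d - b * c.
Proof.
rewrite (expand_det_row _ ord0) !big_ord_recr big_ord0 /= add0r.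
by rewrite /cofactor !det_mx11 !mxE /= expr0 expr1 !mul1r mulN1r mulrN.
Qed.

Lemma adj_mx2 a b c d : \adj (mx2 a b c d : 'M[R]_2) = mx2 d (- b) (- c) a.
Proof.
apply/matrixP => i j; rewrite !mxE /cofactor det_mx11 !mxE.
by case: i => [[|[|?]] Hi] //; case: j => [[|[|?]] Hj] //=;
  rewrite ?addn0 ?add0n ?addn1 ?expr0 ?expr1 ?sqrrN ?expr1n ?mul1r ?mulN1r.
Qed.

End Mx2.

Section Minkowski.
Variable R : finFieldType.
Implicit Types (r s u v : 'cV[R]_4) (a b c d x y z t : R).

Definition col4 x y z t : 'cV[R]_4 := \col_(i < 4) nth 0 [:: x; y; z; t] i.

Lemma cx_col4 x y z t : cx (col4 x y z t) = x. Proof. by rewrite /cx mxE inordK. Qed.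
Lemma cy_col4 x y z t : cy (col4 x y z t) = y. Proof. by rewrite /cy mxE inordK. Qed.
Lemma cz_col4 x y z t : cz (col4 x y z t) = z. Proof. by rewrite /cz mxE inordK. Qed.
Lemma ct_col4 x y z t : ct (col4 x y z t) = t. Proof. by rewrite /ct mxE inordK. Qed.

Lemma cV4P r s :
  [/\ cx r = cx s, cy r = cy s, cz r = cz s & ct r = ct s] -> r = s.
Proof.
case=> ex ey ez et; apply/matrixP => i j; rewrite (ord1 j).
by case: i => [[|[|[|[|?]]]] Hi] //;
  [move: ex | move: ey | move: ez | move: et]; rewrite /cx /cy /cz /ct;
  congr (_ = _); congr (_ _ _); apply/val_inj; rewrite /= inordK.
Qed.

Lemma coordsD r s :
  [/\ cx (r + s) = cx r + cx s, cy (r + s) = cy r + cy s,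
      cz (r + s) = cz r + cz s & ct (r + s) = ct r + ct s].
Proof. by rewrite /cx /cy /cz /ct !mxE. Qed.

Lemma coordsZ a r :
  [/\ cx (a *: r) = a * cx r, cy (a *: r) = a * cy r,
      cz (a *: r) = a * cz r & ct (a *: r) = a * ct r].
Proof. by rewrite /cx /cy /cz /ct !mxE. Qed.

Definition diag4 a b c d : 'M[R]_4 := diag_mx (col4 a b c d)^T.

Lemma coords_diag4 a b c d r :
  [/\ cx (diag4 a b c d *m r) = a * cx r, cy (diag4 a b c d *m r) = b * cy r,
      cz (diag4 a b c d *m r) = c * cz r & ct (diag4 a b c d *m r) = d * ct r].
Proof. by rewrite /cx /cy /cz /ct !mul_diag_mx !mxE !inordK. Qed.

Lemma diag4_lorentz a b c d :
  a ^+ 2 = 1 -> b ^+ 2 = 1 -> c ^+ 2 = 1 -> d ^+ 2 = 1 -> lorentz (diag4 a b c d).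
Proof.
move=> ha hb hc hd r1 r2; rewrite /mink.
have [-> -> -> ->] := coords_diag4 a b c d r1; have [-> -> -> ->] := coords_diag4 a b c d r2.
by ring: ha hb hc hd.
Qed.

Lemma minkDD u v : mink (u + v) (u + v) = mink u u + 2%:R * mink u v + mink v v.
Proof. by rewrite /mink; have [-> -> -> ->] := coordsD u v; ring. Qed.

Lemma minkZZ a u v : mink (a *: u) (a *: v) = a ^+ 2 * mink u v.
Proof.
rewrite /mink; have [-> -> -> ->] := coordsZ a u; have [-> -> -> ->] := coordsZ a v.
ring.
Qed.

Lemma mink_conformal (M : 'M[R]_4) n : 2%:R != 0 :> R ->
  (forall r, mink (M *m r) (M *m r) = n * mink r r) ->
  forall u v, mink (M *m u) (M *m v) = n * mink u v.
Proof.
move=> two_neq0 hM u v; apply: (mulfI two_neq0).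
have := hM (u + v); rewrite mulmxDr !minkDD !hM => e.
by apply: (addrI (n * mink u u)); apply: (addIr (n * mink v v)); rewrite e; ring.
Qed.

Lemma scale_lorentz (M : 'M[R]_4) a : a != 0 ->
  (forall u v, mink (M *m u) (M *m v) = a ^+ 2 * mink u v) -> lorentz (a^-1 *: M).
Proof.
by move=> a0 hM u v; rewrite -!scalemxAl minkZZ hM exprVn mulrA mulVf ?mul1r ?expf_neq0.
Qed.

Lemma scale_anti_lorentz (M : 'M[R]_4) a : a != 0 ->
  (forall u v, mink (M *m u) (M *m v) = - a ^+ 2 * mink u v) -> anti_lorentz (a^-1 *: M).
Proof.
move=> a0 hM u v; rewrite -!scalemxAl minkZZ hM exprVn mulrA mulrN mulVf ?expf_neq0 //.
by rewrite mulN1r.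
Qed.

End Minkowski.

Lemma linear_mx (R : fieldType) n (f : 'cV[R]_n -> 'cV[R]_n) :
  (forall a u v, f (a *: u + v) = a *: f u + f v) ->
  exists M : 'M[R]_n, forall r, M *m r = f r.
Proof.
move=> f_lin.
have f0 : f 0 = 0 by have := f_lin (-1) 0 0; rewrite scaler0 addr0 scaleN1r addNr.
exists (\matrix_(i, j) f (delta_mx j 0) i 0) => r.
have -> : f r = \sum_(j < n) r j 0 *: f (delta_mx j 0).
  have {1}-> : r = \sum_(j < n) r j 0 *: delta_mx j 0.
    by rewrite [LHS]matrix_sum_delta; apply: eq_bigr => j _; rewrite big_ord1.
  by elim/big_rec2: _ => [|j y1 y2 _ <-]; [exact: f0 | exact: f_lin].
apply/matrixP => i k; rewrite (ord1 k) !mxE summxE; apply: eq_bigr => j _.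
by rewrite !mxE mulrC.
Qed.

Section FinFieldSquares.
Variable R : finFieldType.

Lemma finField_two_neq0 : odd #|R| -> 2%:R != 0 :> R.
Proof.
move=> oddR; apply/eqP => two0.
have pc : (2 \in [pchar R])%N by rewrite inE two0 eqxx.
have := card_pprimeChar pc; rewrite /= => eR.
have := finNzRing_gt1 R; move: oddR; rewrite eR oddX orbF.
by case: (logn _ _).
Qed.

Lemma finField_sqr_neqN1 : (#|R| %% 4 = 3)%N -> ~ exists b : R, b ^+ 2 = -1.
Proof.
move=> hR [b hb].
have two_neq0 : 2%:R != 0 :> R.
  by apply: finField_two_neq0; rewrite [#|R|](divn_eq _ 4) hR oddD oddM andbF.
have b4 : b ^+ 4 = 1 by rewrite -[4%N]/(2 * 2)%N exprM hb sqrrN expr1n.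
have bN : - b = b.
  rewrite -{2}(expf_card b) [#|R|](divn_eq _ 4) hR exprD mulnC exprM b4 expr1n mul1r.
  by rewrite exprS hb mulrN1.
move/eqP: bN; rewrite -subr_eq0 -opprD oppr_eq0 -mulr2n -mulr_natl mulf_eq0.
rewrite (negbTE two_neq0) /= => /eqP b0.
by move/eqP: hb; rewrite b0 expr0n eq_sym oppr_eq0 oner_eq0.
Qed.

Lemma card_sqr_fibre (x : R) : (#|[set y : R | y ^+ 2 == x ^+ 2]| <= 2)%N.
Proof.
apply: leq_trans (_ : #|[set x; - x]| <= 2)%N; last by rewrite cards2; case: (_ != _).
apply: subset_leq_card; apply/subsetP => y; rewrite !inE.
by rewrite -subr_eq0 subr_sqr mulf_eq0 subr_eq0 addr_eq0.
Qed.

Lemma card_le_double_squares : (#|R| <= #|[set x ^+ 2 | x in [set: R]]| * 2)%N.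
Proof.
rewrite -cardsT -sum1_card (partition_big_imset (fun x : R => x ^+ 2)) /= -sum_nat_const.
apply: leq_sum => _ /imsetP [x _ ->].
rewrite (eq_bigl (mem [set y | y ^+ 2 == x ^+ 2])) ?sum1_card ?card_sqr_fibre // => y.
by rewrite !inE.
Qed.

(* Otherwise the squares and their multiples by [n], each at least half of [R],
   would meet only at [0] and both avoid [-1], making [#|R|] even. *)
Lemma nonsquareN_square (n : R) : odd #|R| ->
  ~ (exists b : R, b ^+ 2 = -1) -> ~ (exists b, b ^+ 2 = n) -> exists b, b ^+ 2 = - n.
Proof.
move=> oddR nsqN1 nsqn.
pose S := [set x ^+ 2 | x in [set: R]]; pose nS := [set n * s | s in S].
have n0 : n != 0 by apply/eqP => n0; apply: nsqn; exists 0; rewrite n0 expr0n.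
have [/imsetP [_ /imsetP [u _ ->] eN1] | N1_nS] := boolP (-1 \in nS).
  by exists (n * u); rewrite exprMn expr2 -mulrA -eN1 mulrN1.
have cnS : #|nS| = #|S| by rewrite card_imset //; apply: mulfI.
have cI : (#|nS :&: S| <= 1)%N.
  rewrite -(cards1 (0 : R)); apply: subset_leq_card; apply/subsetP => y.
  rewrite !inE => /andP [/imsetP [_ /imsetP [u _ ->] ->] /imsetP [v _ e]].
  have [->|u0] := eqVneq u 0; first by rewrite expr0n mulr0.
  by case: nsqn; exists (v / u); rewrite expr_div_n -e mulfK // expf_neq0.
have : nS :|: S \subset [set~ -1].
  apply/subsetP => y; rewrite in_setU in_setC1 => hy; apply: contraTneq hy => ->.
  rewrite negb_or N1_nS /=; apply/negP => /imsetP [b _ eb].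
  by apply: nsqN1; exists b; rewrite eb.
move/subset_leq_card; rewrite cardsC1 cardsU cnS => hU.
have hS : (#|R| <= #|S| * 2)%N := card_le_double_squares.
have eR : #|R| = (#|S| * 2)%N.
  move: hS hU cI; set N := #|R|; set s := #|S|; set i := #|_ :&: _|; lia.
by move: oddR; rewrite eR oddM andbF.
Qed.

End FinFieldSquares.

Section HermitianModel.
Variables (F K : finFieldType) (iota : {rmorphism F -> K}) (q : nat) (im : K).
Hypotheses (hF : #|F| = q) (hK : #|K| = (q ^ 2)%N) (hq : (q %% 4 = 3)%N)
  (him : im ^+ 2 = -1).

Local Notation Omega := (Omega iota im).
Local Notation Omega_inv := (Omega_inv iota im).
Local Notation conjq := (@Defs.conjq K q).
Local Notation adjq := (@Defs.adjq K q).

Let q_odd : odd q.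
Proof. by rewrite [q](divn_eq q 4) hq oddD oddM andbF. Qed.

Let q_gt1 : (1 < q)%N.
Proof. by case: q hq => [|[|]]. Qed.

Lemma F_two_neq0 : 2%:R != 0 :> F.
Proof. by apply: finField_two_neq0; rewrite hF. Qed.

Lemma K_two_neq0 : 2%:R != 0 :> K.
Proof. by rewrite -(rmorph_nat iota) fmorph_eq0 F_two_neq0. Qed.

Lemma im_neq0 : im != 0.
Proof.
by apply/eqP => im0; move/eqP: him; rewrite im0 expr0n eq_sym oppr_eq0 oner_eq0.
Qed.

Lemma pchar_nat_q : [pchar K].-nat q.
Proof.
have [p p_pr pc] := finPcharP K.
have : (q %| p ^ logn p (q ^ 2))%N.
  by have := card_pprimeChar pc; rewrite /= hK => <-; rewrite dvdn_mull.
case/(dvdn_pfactor _ _ p_pr) => m _ ->.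
by rewrite pnatX (eq_pnat _ (pcharf_eq pc)) pnat_id.
Qed.

Lemma conjqD x y : conjq (x + y) = conjq x + conjq y.
Proof. exact: exprDn_pchar pchar_nat_q. Qed.

Lemma conjqM x y : conjq (x * y) = conjq x * conjq y.
Proof. exact: exprMn. Qed.

Lemma conjq0 : conjq 0 = 0.
Proof. by rewrite /conjq expr0n; case: q q_gt1. Qed.

Lemma conjq1 : conjq 1 = 1.
Proof. exact: expr1n. Qed.

Definition conjR : {rmorphism K -> K} :=
  HB.pack conjq (GRing.isNmodMorphism.Build K K conjq (conjq0, conjqD))
    (GRing.isMonoidMorphism.Build K K conjq (conjq1, conjqM)).

Lemma conjRE x : conjR x = conjq x. Proof. by []. Qed.

Lemma conjqK : involutive conjq.
Proof. by move=> x; rewrite /Defs.conjq -exprM mulnn -hK expf_card. Qed.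

Lemma conjq_iota a : conjq (iota a) = iota a.
Proof. by rewrite /Defs.conjq -rmorphXn -hF expf_card. Qed.

Lemma conjq_im : conjq im = - im.
Proof.
have im4 : im ^+ 4 = 1 by rewrite -[4%N]/(2 * 2)%N exprM him sqrrN expr1n.
by rewrite /Defs.conjq [q](divn_eq q 4) hq exprD mulnC exprM im4 expr1n mul1r exprS him mulrN1.
Qed.

(* The [q] elements of [iota @: F] are roots of ['X^q - 'X], which has no others. *)
Lemma conjq_fixed x : conjq x = x -> exists a, iota a = x.
Proof.
move=> hx; pose S := [set y : K | y ^+ q == y]; pose I := iota @: [set: F].
have sIS : I \subset S.
  by apply/subsetP => _ /imsetP [a _ ->]; rewrite inE -[_ ^+ q]/(conjq _) conjq_iota.
have cI : #|I| = q by rewrite card_imset ?cardsT ?hF //; apply: fmorph_inj.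
have cS : (#|S| <= q)%N.
  have sP : size ('X^q - 'X : {poly K}) = q.+1.
    by rewrite size_polyDl ?size_polyXn // size_polyN size_polyX ltnS q_gt1.
  have : (size (enum S) < size ('X^q - 'X : {poly K})%R)%N.
    apply: max_poly_roots; first by rewrite -size_poly_eq0 sP.
      by apply/allP => y; rewrite mem_enum inE /root !hornerE subr_eq0.
    exact: enum_uniq.
  by rewrite sP -cardE.
have eIS : I = S by apply/eqP; rewrite eqEcard sIS cI.
have : x \in S by rewrite inE -[_ ^+ q]/(conjq _) hx.
by rewrite -eIS => /imsetP [a _ ->]; exists a.
Qed.

Lemma adjqE (A : 'M[K]_2) : adjq A = (map_mx conjR A)^T.
Proof. by []. Qed.

Lemma adjq_mul (A B : 'M[K]_2) : adjq (A *m B) = adjq B *m adjq A.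
Proof. by rewrite !adjqE map_mxM trmx_mul. Qed.

Lemma adjqK : involutive adjq.
Proof. by move=> A; apply/matrixP => i j; rewrite !mxE conjqK. Qed.

Lemma OmegaD r s : Omega (r + s) = Omega r + Omega s.
Proof.
rewrite /Omega mx2D; have [-> -> -> ->] := coordsD r s.
by congr mx2; rewrite ?rmorphD ?rmorphB; ring.
Qed.

Lemma OmegaZ a r : Omega (a *: r) = iota a *: Omega r.
Proof.
rewrite /Omega mx2Z; have [-> -> -> ->] := coordsZ a r.
by congr mx2; rewrite ?rmorphD ?rmorphB ?rmorphM; ring.
Qed.

Lemma Omega_herm r : herm2 q (Omega r).
Proof.
rewrite /herm2 adjqE /Omega map_mx2 mx2T; apply/eqP.
by congr mx2; rewrite ?rmorphD ?rmorphB ?rmorphN ?rmorphM !conjRE ?conjq_iota ?conjq_im; ring.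
Qed.

Lemma det_Omega r : \det (Omega r) = iota (mink r r).
Proof.
rewrite /Omega det_mx2 /mink ?rmorphD ?rmorphB ?rmorphN ?rmorphM.
by move: him; rewrite expr2 => him'; ring: him'.
Qed.

Lemma Omega_inj : injective Omega.
Proof.
move=> r s /mx2_inj [/fmorph_inj etx eyz eyz' /fmorph_inj etx'].
have two_im : 2%:R * im != 0 by rewrite mulf_neq0 ?K_two_neq0 ?im_neq0.
apply: cV4P; split.
- apply: (mulfI F_two_neq0); transitivity ((ct r + cx r) - (ct r - cx r)); first ring.
  by rewrite etx etx'; ring.
- apply: (fmorph_inj iota); apply: (mulfI K_two_neq0).
  transitivity ((iota (cy r) + im * iota (cz r)) + (iota (cy r) - im * iota (cz r))); first ring.
  by rewrite eyz eyz'; ring.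
- apply: (fmorph_inj iota); apply: (mulfI two_im).
  transitivity ((iota (cy r) + im * iota (cz r)) - (iota (cy r) - im * iota (cz r))); first ring.
  by rewrite eyz eyz'; ring.
- apply: (mulfI F_two_neq0); transitivity ((ct r + cx r) + (ct r - cx r)); first ring.
  by rewrite etx etx'; ring.
Qed.

Lemma Omega_surj A : herm2 q A -> exists r, Omega r = A.
Proof.
move=> /eqP hA.
have e00 : adjq A ord0 ord0 = A ord0 ord0 by rewrite hA.
have e11 : adjq A ord_max ord_max = A ord_max ord_max by rewrite hA.
have e10 : adjq A ord_max ord0 = A ord_max ord0 by rewrite hA.
rewrite /Defs.adjq !mxE /= in e00 e11 e10.
set a := A ord0 ord0 in e00; set d := A ord_max ord_max in e11.
set b := A ord0 ord_max in e10.
have c2 : conjq 2%:R = 2%:R by rewrite -conjRE rmorph_nat.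
have [t ht] : exists t, iota t = (a + d) / 2%:R.
  by apply: conjq_fixed; rewrite -!conjRE rmorphM rmorphD fmorphV !conjRE c2 e00 e11.
have [x hx] : exists x, iota x = (a - d) / 2%:R.
  by apply: conjq_fixed; rewrite -!conjRE rmorphM rmorphB fmorphV !conjRE c2 e00 e11.
have [y hy] : exists y, iota y = (b + conjq b) / 2%:R.
  by apply: conjq_fixed; rewrite -!conjRE rmorphM rmorphD fmorphV !conjRE c2 conjqK addrC.
have [z hz] : exists z, iota z = (b - conjq b) / (2%:R * im).
  apply: conjq_fixed; rewrite -!conjRE rmorphM rmorphB fmorphV rmorphM !conjRE c2 conjqK.
  by rewrite conjq_im mulrN invrN mulrN -mulNr opprB.
exists (col4 x y z t); rewrite /Omega cx_col4 cy_col4 cz_col4 ct_col4.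
rewrite [RHS]mx2_eta -/a -/b -/d -e10 ?rmorphD ?rmorphB ?rmorphN ht hx hy hz.
by congr mx2; field; rewrite ?K_two_neq0 ?im_neq0.
Qed.

Lemma OmegaK : cancel Omega Omega_inv.
Proof.
move=> r; rewrite /Defs.Omega_inv; case: pickP => [s /eqP /Omega_inj //|].
by move/(_ r); rewrite eqxx.
Qed.

Lemma Omega_invK A : herm2 q A -> Omega (Omega_inv A) = A.
Proof. by case/Omega_surj => r <-; rewrite OmegaK. Qed.

Lemma conjugated_translation B : herm2 q B ->
  exists r0, forall r, conjugated iota im (fun A => A + B) r = r + r0.
Proof. by case/Omega_surj => r0 <-; exists r0 => r; rewrite /conjugated -OmegaD OmegaK. Qed.

Lemma adj_Omega r : \adj (Omega r) = Omega (diag4 (-1) (-1) (-1) 1 *m r).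
Proof.
rewrite /Omega adj_mx2; have [-> -> -> ->] := coords_diag4 (-1) (-1) (-1) 1 r.
by congr mx2; rewrite ?rmorphD ?rmorphB ?rmorphN ?rmorphM ?rmorph1 ?rmorphN1; ring.
Qed.

Lemma invmx_Omega r : mink r r != 0 ->
  invmx (Omega r) = Omega ((mink r r)^-1 *: (diag4 (-1) (-1) (-1) 1 *m r)).
Proof.
move=> mr; have uA : Omega r \in unitmx by rewrite unitmxE unitfE det_Omega fmorph_eq0.
by rewrite /invmx uA det_Omega adj_Omega OmegaZ fmorphV.
Qed.

Lemma conjugated_inversion : exists L, lorentz L /\
  forall r, mink r r != 0 -> conjugated iota im invmx r = (mink r r)^-1 *: (L *m r).
Proof.
exists (diag4 (-1) (-1) (-1) 1); split; first by apply: diag4_lorentz; rewrite ?sqrrN expr1n.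
by move=> r mr; rewrite /conjugated invmx_Omega // OmegaK.
Qed.

Section FieldAutomorphism.
Variable sigma : {rmorphism K -> K}.

Lemma sigma_iota_fixed a : exists b, iota b = sigma (iota a).
Proof.
by apply: conjq_fixed; rewrite /Defs.conjq -rmorphXn -[iota a ^+ q]/(conjq (iota a)) conjq_iota.
Qed.

Definition tau a : F := odflt 0 [pick b | iota b == sigma (iota a)].

Lemma tauE a : iota (tau a) = sigma (iota a).
Proof.
rewrite /tau; case: pickP => [b /eqP //|none].
by have [b hb] := sigma_iota_fixed a; move: (none b); rewrite hb eqxx.
Qed.

Lemma tau0 : tau 0 = 0.
Proof. by apply: (fmorph_inj iota); rewrite tauE !rmorph0. Qed.
Lemma tauD : {morph tau : x y / x + y}.
Proof. by move=> x y; apply: (fmorph_inj iota); rewrite tauE !rmorphD -!tauE. Qed.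
Lemma tau1 : tau 1 = 1.
Proof. by apply: (fmorph_inj iota); rewrite tauE !rmorph1. Qed.
Lemma tauM : {morph tau : x y / x * y}.
Proof. by move=> x y; apply: (fmorph_inj iota); rewrite tauE !rmorphM -!tauE. Qed.

Definition tauR : {rmorphism F -> F} :=
  HB.pack tau (GRing.isNmodMorphism.Build F F tau (tau0, tauD))
    (GRing.isMonoidMorphism.Build F F tau (tau1, tauM)).

Lemma tau_bij : bijective tauR.
Proof.
by apply: injF_bij => x y /(congr1 iota); rewrite /= !tauE => /fmorph_inj /fmorph_inj.
Qed.

Lemma sigma_im : exists2 e : F, e ^+ 2 = 1 & sigma im = iota e * im.
Proof.
have : (sigma im - im) * (sigma im + im) = 0.
  by rewrite -subr_sqr -rmorphXn him rmorphN1 subrr.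
move/eqP; rewrite mulf_eq0 subr_eq0 addr_eq0 => /orP [/eqP ->|/eqP ->].
  by exists 1; rewrite ?expr1n ?rmorph1 ?mul1r.
by exists (-1); rewrite ?sqrrN ?expr1n ?rmorphN1 ?mulN1r.
Qed.

Lemma conjugated_automorphism : exists L (tau : {rmorphism F -> F}),
  lorentz L /\ bijective tau /\
  forall r, conjugated iota im (map_mx sigma) r = L *m map_mx tau r.
Proof.
have [e e2 se] := sigma_im.
exists (diag4 1 1 e 1), tauR; split; first by apply: diag4_lorentz; rewrite ?expr1n.
split => [|r]; first exact: tau_bij.
rewrite /conjugated (_ : map_mx sigma _ = Omega (diag4 1 1 e 1 *m map_mx tauR r)) ?OmegaK //.
rewrite /Omega map_mx2; have [-> -> -> ->] := coords_diag4 1 1 e 1 (map_mx tauR r).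
rewrite /cx /cy /cz /ct !mxE /= ?rmorphD ?rmorphB ?rmorphN ?rmorphM se -!tauE.
by congr mx2; ring.
Qed.

End FieldAutomorphism.

Section Congruence.
Variable P : 'M[K]_2.
Hypothesis P_unit : P \in unitmx.

Definition Pcong r := Omega_inv (P *m Omega r *m adjq P).

Lemma Omega_Pcong r : Omega (Pcong r) = P *m Omega r *m adjq P.
Proof.
by apply: Omega_invK; rewrite /herm2 !adjq_mul adjqK (eqP (Omega_herm r)) mulmxA.
Qed.

Lemma Pcong_linear a u v : Pcong (a *: u + v) = a *: Pcong u + Pcong v.
Proof.
apply: Omega_inj; rewrite OmegaD OmegaZ !Omega_Pcong OmegaD OmegaZ.
by rewrite mulmxDr mulmxDl -scalemxAr -scalemxAl.
Qed.

Definition normdet := \det P * conjq (\det P).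

Lemma normdet_fixed : exists n, iota n = normdet.
Proof. by apply: conjq_fixed; rewrite /normdet conjqM conjqK mulrC. Qed.

Lemma normdet_neq0 : normdet != 0.
Proof.
have detP0 : \det P != 0 by rewrite -unitfE -unitmxE.
by rewrite /normdet mulf_neq0 // /Defs.conjq expf_neq0.
Qed.

Lemma Pcong_mx n : iota n = normdet -> exists M : 'M[F]_4,
  (forall r, M *m r = Pcong r) /\ forall u v, mink (M *m u) (M *m v) = n * mink u v.
Proof.
move=> hn; have [M hM] := linear_mx Pcong_linear.
exists M; split => //; apply: mink_conformal F_two_neq0 _ => r.
apply: (fmorph_inj iota); rewrite hM rmorphM hn -!det_Omega Omega_Pcong !det_mulmx.
by rewrite adjqE det_tr det_map_mx conjRE /normdet; ring.
Qed.

Lemma conjugated_congruence_square : (exists a, iota a ^+ 2 = normdet) ->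
  exists L alpha, lorentz L /\ alpha != 0 /\
    forall r, conjugated iota im (fun A => P *m A *m adjq P) r = alpha *: (L *m r).
Proof.
case=> a ha.
have a0 : a != 0.
  by apply: contraNneq normdet_neq0 => a0; rewrite -ha a0 rmorph0 expr0n.
have hn : iota (a ^+ 2) = normdet by rewrite rmorphXn.
have [M [hM hMM]] := Pcong_mx hn.
exists (a^-1 *: M), a; split; first exact: scale_lorentz.
by split => // r; rewrite -scalemxAl scalerA mulfV // scale1r hM.
Qed.

(* Since [q = 3 mod 4], [-1] is not a square in [F], so [-normdet] is a square. *)
Lemma conjugated_congruence_nonsquare : ~ (exists a, iota a ^+ 2 = normdet) ->
  exists L alpha, anti_lorentz L /\ alpha != 0 /\
    forall r, conjugated iota im (fun A => P *m A *m adjq P) r = alpha *: (L *m r).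
Proof.
move=> nsq; have [n hn] := normdet_fixed.
have [al hal] : exists al, al ^+ 2 = - n.
  apply: nonsquareN_square; first by rewrite hF.
    by apply: finField_sqr_neqN1; rewrite hF.
  by case=> b hb; apply: nsq; exists b; rewrite -rmorphXn hb hn.
have al0 : al != 0.
  apply: contraNneq normdet_neq0 => al0.
  by rewrite -hn -[n]opprK -hal al0 expr0n oppr0 rmorph0.
have [M [hM hMM]] := Pcong_mx hn.
exists (al^-1 *: M), al; split.
  by apply: scale_anti_lorentz => // u v; rewrite hMM hal opprK.
by split => // r; rewrite -scalemxAl scalerA mulfV // scale1r hM.
Qed.

End Congruence.

End HermitianModel.

Theorem lemma4p8 (F K : finFieldType) (iota : {rmorphism F -> K}) (q : nat)
  (im : K)
  (hF : #|F| = q) (hK : #|K| = (q ^ 2)%N) (hq : (q %% 4 = 3)%N)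
  (him : im ^+ 2 = -1) :
  let psi := conjugated iota im in
  (* (i) translation *)
  (forall B : 'M[K]_2, herm2 q B ->
     exists r0 : 'cV[F]_4,
       forall r : 'cV[F]_4, psi (fun A => A + B) r = r + r0) /\
  (* (ii) inversion on HGL_2 *)
  (exists L : 'M[F]_4, lorentz L /\
     forall r : 'cV[F]_4, mink r r != 0 ->
       psi (fun A => invmx A) r = (mink r r)^-1 *: (L *m r)) /\
  (* (iii) entrywise field automorphism *)
  (forall sigma : {rmorphism K -> K}, bijective sigma ->
     exists L : 'M[F]_4, exists tau : {rmorphism F -> F},
       lorentz L /\ bijective tau /\
       forall r : 'cV[F]_4, psi (fun A => map_mx sigma A) r = L *m map_mx tau r) /\
  (* (iv) congruence, det P * conj(det P) a square in F_q *)
  (forall P : 'M[K]_2, P \in unitmx ->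
     (exists a : F, iota a ^+ 2 = \det P * conjq q (\det P)) ->
     exists L : 'M[F]_4, exists alpha : F,
       lorentz L /\ alpha != 0 /\
       forall r : 'cV[F]_4, psi (fun A => P *m A *m adjq q P) r = alpha *: (L *m r)) /\
  (* (v) congruence, det P * conj(det P) not a square in F_q *)
  (forall P : 'M[K]_2, P \in unitmx ->
     ~ (exists a : F, iota a ^+ 2 = \det P * conjq q (\det P)) ->
     exists L : 'M[F]_4, exists alpha : F,
       anti_lorentz L /\ alpha != 0 /\
       forall r : 'cV[F]_4, psi (fun A => P *m A *m adjq q P) r = alpha *: (L *m r)).
Proof.
move=> psi; rewrite {}/psi.
split; first exact (conjugated_translation iota hF hK hq him).
split; first exact (conjugated_inversion iota hF hq him).
split; first by move=> sigma _; exact (conjugated_automorphism iota hF hq him sigma).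
split=> P P_unit; first exact (conjugated_congruence_square hF hK hq him P_unit).
exact (conjugated_congruence_nonsquare hF hK hq him P_unit).
Qed.
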